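(* Let $A$ be a set, $T=A^*$, $Y$ a semilattice and $\cdot$ a left partial action of $T$ on $Y$ satisfying axioms (A), (B), (C) which is a partially defined action and such that $M(T,Y)$ is an ultra $F$-restriction monoid. For $v\in T$ let $d_v$ be the greatest element of $\mathrm{dom}(\varphi_v)$. Then the poset $X$ (defined in the context) is a meet semilattice, and for $[e,v],[f,u]\in X$, $$[e,v]\wedge[f,u]=[\,v'\cdot(e\wedge d_{v'})\wedge u'\cdot(f\wedge d_{u'}),\,k\,],$$ where $k$ is the longest common prefix of $v$ and $u$, and $v=kv'$, $u=ku'$.
   Context: $A^*$ is the free monoid on $A$. A left partial action of $T$ on $Y$: $1\cdot y=y$ always defined; if $t\cdot y$, $s\cdot(t\cdot y)$ are defined then $(st)\cdot y$ is defined and equals it. With $\varphi_t\colon y\mapsto t\cdot y$: (A) $\mathrm{dom}\varphi_t$, $\mathrm{ran}\varphi_t$ are order ideals of $Y$; (B) $\varphi_t$ is an order-isomorphism between them; (C) $\mathrm{dom}\varphi_t\neq\varnothing$. Partially defined action: $(st)\cdot x$ defined iff $t\cdot x$ and $s\cdot(t\cdot x)$ defined. Reverse: $y\circ t=\varphi_t^{-1}(y)$ for $y\in\mathrm{ran}\varphi_t$. $M(T,Y)=\{(y,t)\colon y\circ t\text{ defined}\}$ with $(x,s)(y,t)=(s\cdot((x\circ s)\wedge y),st)$, $(y,t)^*=(y\circ t,1)$, $(y,t)^+=(y,1)$; it is a proper restriction semigroup. A restriction monoid is ultra $F$-restriction if it is proper, every class of the least congruence $\sigma$ identifying projections has a maximum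 in the natural order ($a\le b\iff a=eb$ for a projection $e$), and its underlying left partial action (of $S/\sigma$ on $P(S)$: $t\cdot e$ defined iff some $a\in t$ has $a^*\ge e$, value $(ae)^+$) is a partially defined action. Construction of $X$: for $(x,s),(y,t)\in Y\times T$ put $(x,s)\to(y,t)$ if there is $p\in T$ with $s=tp$, $p\cdot x$ defined and $p\cdot x=y$. Let $\sim$ be the equivalence generated by $\to$. On $(Y\times T)/\!\sim$ put $C\ge D$ if there are $(x,s)\in C$, $(y,s)\in D$ with $x\ge y$ (a preorder). Identify classes that are mutually $\le$ to get the poset $X$, whose elements are written $[x,s]$, with the induced order. *)

From HB Require Import structures.
From mathcomp Require Import all_boot all_order.
From Stdlib Require Import ClassicalEpsilon Relations.
Set Implicit Arguments. Unset Strict Implicit. Unset Printing Implicit Defensive.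
Import Order.Theory.
Local Open Scope order_scope.

Section PartialAction.
Variables (A : Type) (disp : Order.disp_t) (Y : meetSemilatticeType disp).
(* T = A^* is [seq A] with concatenation; [act t y = Some z] means t.y is defined and equals z. *)
Variable act : seq A -> Y -> option Y.

Definition defined (t : seq A) (y : Y) : Prop := act t y <> None.

Definition left_partial_action : Prop :=
  (forall y, act [::] y = Some y) /\
  (forall s t y z w, act t y = Some z -> act s z = Some w -> act (s ++ t) y = Some w).

Definition axiomA : Prop :=
  (forall t y z, defined t y -> z <= y -> defined t z) /\
  (forall t y y' z, act t y = Some y' -> z <= y' -> exists w, act t w = Some z).

Definition axiomB : Prop :=
  forall t y z y' z', act t y = Some y' -> act t z = Some z' -> (y <= z <-> y' <= z').

Definition axiomC : Prop := forall t, exists y, defined t y.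

Definition partially_defined_action : Prop :=
  forall s t x, defined (s ++ t) x <-> exists z, act t x = Some z /\ defined s z.

(* reverse action y o t = phi_t^{-1}(y) (junk value y outside ran phi_t) *)
Definition ract (y : Y) (t : seq A) : Y :=
  epsilon (inhabits y) (fun x => act t x = Some y).

(* the monoid M(T,Y) : carrier Y * seq A restricted to inM *)
Definition inM (a : Y * seq A) : Prop := exists x, act a.2 x = Some a.1.

Definition mulM (a b : Y * seq A) : Y * seq A :=
  (odflt b.1 (act a.2 (ract a.1 a.2 `&` b.1)), a.2 ++ b.2).

Definition starM (a : Y * seq A) : Y * seq A := (ract a.1 a.2, [::]).
Definition plusM (a : Y * seq A) : Y * seq A := (a.1, [::]).

Definition projM (e : Y * seq A) : Prop := exists a, inM a /\ e = plusM a.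

Definition natleM (a b : Y * seq A) : Prop := exists e, projM e /\ a = mulM e b.

Definition congruenceM (R : Y * seq A -> Y * seq A -> Prop) : Prop :=
  (forall a, inM a -> R a a) /\
  (forall a b, R a b -> R b a) /\
  (forall a b c, R a b -> R b c -> R a c) /\
  (forall a b c d, inM a -> inM b -> inM c -> inM d ->
     R a b -> R c d -> R (mulM a c) (mulM b d)).

Definition sigmaM (a b : Y * seq A) : Prop :=
  inM a /\ inM b /\
  forall R, congruenceM R -> (forall e f, projM e -> projM f -> R e f) -> R a b.

Definition monoidM : Prop :=
  exists one, inM one /\ forall a, inM a -> mulM one a = a /\ mulM a one = a.

Definition properM : Prop :=
  (forall a b, sigmaM a b -> plusM a = plusM b -> a = b) /\
  (forall a b, sigmaM a b -> starM a = starM b -> a = b).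

Definition sigma_classes_have_max : Prop :=
  forall a, inM a -> exists m, sigmaM m a /\ forall b, sigmaM b a -> natleM b m.

(* underlying left partial action of M/sigma on P(M):
   [t . e] defined iff some b in t has e <= b^*, value (b e)^+ *)
Definition uact_defined (a e : Y * seq A) : Prop :=
  exists b, sigmaM b a /\ natleM e (starM b).

Definition underlying_partially_defined : Prop :=
  forall a b e, inM a -> inM b -> projM e ->
    (uact_defined (mulM a b) e <->
     exists b', sigmaM b' b /\ natleM e (starM b') /\ uact_defined a (plusM (mulM b' e))).

Definition ultra_F_restriction_monoid : Prop :=
  monoidM /\ properM /\ sigma_classes_have_max /\ underlying_partially_defined.

Definition stepX (p q : Y * seq A) : Prop :=
  exists r, p.2 = q.2 ++ r /\ act r p.1 = Some q.1.

Definition simX : Y * seq A -> Y * seq A -> Prop := clos_refl_sym_trans _ stepX.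

(* C >= D iff exists (x,s) in C, (y,s) in D with y <= x; here leX p q means [p] <= [q] *)
Definition leX (p q : Y * seq A) : Prop :=
  exists x s y, simX (x, s) q /\ simX (y, s) p /\ y <= x.

Definition is_meetX (m p q : Y * seq A) : Prop :=
  leX m p /\ leX m q /\ forall r, leX r p -> leX r q -> leX r m.

Definition greatest_of_dom (v : seq A) (d : Y) : Prop :=
  defined v d /\ forall y, defined v y -> y <= d.

End PartialAction.

(* Each step (x, s) -> (y, t) of the construction of X cuts a suffix off the word s by
   acting with it.  Because the action is partially defined, two steps out of the same
   pair are comparable, so [~] is the relation "has a common successor", and a lower
   bound of [e, v] is, up to [~], a pair [g, w] with w a prefix of v and g the image of
   something below e.  For a common lower bound of [e, k v'] and [f, k u'] the prefix w
   must then be a prefix of the longest common prefix k; pushing it down to level k, it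
   lies below v'.(e /\ d_v') /\ u'.(f /\ d_u'), because d_v' and d_u' bound the domains.
   The greatest element d_v exists since the maximum of the sigma-class of (y, v) in
   M(T, Y) is of the form (m, v) with every v-image below m. *)
From HB Require Import structures.
From mathcomp Require Import all_boot all_order.
From Stdlib Require Import ClassicalEpsilon Relations.
From Stdlib Require List.
Set Implicit Arguments. Unset Strict Implicit.
Import Order.Theory.
Local Open Scope order_scope.

Lemma prefix_of_lcp (A : Type) (k v' u' w x1 x2 : seq A) :
  ~ (exists (a : A) v'' u'', v' = a :: v'' /\ u' = a :: u'') ->
  k ++ v' = w ++ x1 -> k ++ u' = w ++ x2 -> exists n, k = w ++ n.
Proof.
move=> lcp Ev Eu.
have [q [[-> _]|[Ew Ev']]] := @List.app_eq_app _ _ _ _ _ Ev; first by exists q.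
rewrite Ew -catA in Eu; move/List.app_inv_head: Eu => Eu.
case: q Ew Ev' Eu => [|a q] Ew Ev' Eu; first by exists [::]; rewrite Ew List.app_nil_r cats0.
by case: lcp; exists a, (q ++ x1), (q ++ x2).
Qed.

Section PartialActionOfFreeMonoid.
Variables (A : Type) (disp : Order.disp_t) (Y : meetSemilatticeType disp).
Variable act : seq A -> Y -> option Y.
Hypotheses (lpa : left_partial_action act) (pda : partially_defined_action act).
Hypotheses (axA : axiomA act) (axB : axiomB act).

Lemma act_cat_inv s t x w :
  act (s ++ t) x = Some w -> exists z, act t x = Some z /\ act s z = Some w.
Proof.
move=> Hst; have /pda [z [Hz]] : defined act (s ++ t) x by rewrite /defined Hst.
rewrite /defined; case Hs: (act s z) => [w'|] // _.
exists z; split=> //.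
by move: (lpa.2 _ _ _ _ _ Hz Hs); rewrite Hst => -[->].
Qed.

Lemma act_inj t y z c : act t y = Some c -> act t z = Some c -> y = z.
Proof.
move=> Hy Hz; apply/le_anti/andP; split.
- exact: (axB Hy Hz).2 (lexx c).
- exact: (axB Hz Hy).2 (lexx c).
Qed.

Lemma act_le_dom t y y' z :
  act t y = Some y' -> z <= y -> exists z', act t z = Some z' /\ z' <= y'.
Proof.
move=> Hy zy; have : defined act t z by apply: axA.1 zy; rewrite /defined Hy.
rewrite /defined; case Hz: (act t z) => [z'|] // _.
by exists z'; split=> //; apply/(axB Hz Hy).
Qed.

Lemma act_le_ran t y y' z' :
  act t y = Some y' -> z' <= y' -> exists z, act t z = Some z' /\ z <= y.
Proof.
move=> Hy zy; have [z Hz] := axA.2 _ _ _ _ Hy zy.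
by exists z; split=> //; apply/(axB Hz Hy).
Qed.

Lemma stepX_refl p : stepX act p p.
Proof. by case: p => x s; exists [::]; rewrite cats0 lpa.1. Qed.

Lemma stepX_trans p q r : stepX act p q -> stepX act q r -> stepX act p r.
Proof.
case: p q r => [x s] [y t] [z w] [a [/= -> Ha]] [b [/= -> Hb]].
by exists (b ++ a); rewrite catA; split=> //; apply: lpa.2 Ha Hb.
Qed.

Lemma stepX_total p q r : stepX act p q -> stepX act p r -> stepX act q r \/ stepX act r q.
Proof.
case: p q r => [x s] [y t] [z w] [a [/= -> Ha]] [b [/= Es Hb]].
have [c [[Et Ea]|[Ew Eb]]] := @List.app_eq_app _ _ _ _ _ Es.
- left; exists c; split=> //=; rewrite Ea in Hb.
  by have [z' [Hz' Hcz']] := act_cat_inv Hb; move: Hz'; rewrite Ha => -[->].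
- right; exists c; split=> //=; rewrite Eb in Ha.
  by have [z' [Hz' Hcz']] := act_cat_inv Ha; move: Hz'; rewrite Hb => -[->].
Qed.

Lemma simX_joinable p q : simX act p q -> exists r, stepX act p r /\ stepX act q r.
Proof.
elim=> {p q} [p q Hpq|p|p q _ [r [Hp Hq]]|p q r _ [r1 [Hp Hq1]] _ [r2 [Hq2 Hr]]].
- by exists q; split=> //; apply: stepX_refl.
- by exists p; split; apply: stepX_refl.
- by exists r.
- have [H|H] := stepX_total Hq1 Hq2.
  + by exists r2; split=> //; apply: stepX_trans Hp H.
  + by exists r1; split=> //; apply: stepX_trans Hr H.
Qed.

Lemma leX_refl p : leX act p p.
Proof. by case: p => x s; exists x, s, x; do !split=> //; apply: rst_refl. Qed.

Lemma leX_trans p q r : leX act p q -> leX act q r -> leX act p r.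
Proof.
move=> [x [s [y [Hxq [Hyp yx]]]]] [x' [s' [y' [Hxr [Hyq yx']]]]].
have [[z w] [[a [/= Es Ha]] [b [/= Es' Hb]]]] :=
  simX_joinable (rst_trans _ _ _ _ _ Hxq (rst_sym _ _ _ _ Hyq)).
have [y1 [Hy1 y1z]] := act_le_dom Ha yx.
have [y2 [Hy2 y2y']] := act_le_ran Hb y1z.
exists x', s', y2; split=> //; split; last exact: le_trans y2y' yx'.
apply: (@rst_trans _ _ _ (y1, w)); first by apply: rst_step; exists b.
by apply: rst_trans _ _ _ _ _ (rst_sym _ _ _ _ (rst_step _ _ _ _ _)) Hyp; exists a.
Qed.

Lemma leX_inv r e v : leX act r (e, v) ->
  exists w q e1 g, v = w ++ q /\ e1 <= e /\ act q e1 = Some g /\ simX act r (g, w).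
Proof.
move=> [x [s [y [Hx [Hy yx]]]]].
have [[z w] [[a [/= Es Ha]] [q [/= Ev Hq]]]] := simX_joinable Hx.
have [g [Hg gz]] := act_le_dom Ha yx.
have [e1 [He1 e1e]] := act_le_ran Hq gz.
exists w, q, e1, g; do !split=> //.
by apply: rst_trans _ _ _ _ _ (rst_sym _ _ _ _ Hy) (rst_step _ _ _ _ _); exists a.
Qed.

Lemma leX_cat t k x y e g :
  act t x = Some y -> g <= y -> x <= e -> leX act (g, k) (e, k ++ t).
Proof.
move=> Hx gy xe; have [z [Hz zx]] := act_le_ran Hx gy.
exists e, (k ++ t), z; split; first exact: rst_refl.
by split; [apply: rst_step; exists t | exact: le_trans zx xe].
Qed.

Variable d : seq A -> Y.
Hypothesis greatest_d : forall v, greatest_of_dom act v (d v).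

Lemma act_below_greatest v x y : act v x = Some y -> x <= d v.
Proof. by move=> Hx; apply: (greatest_d v).2; rewrite /defined Hx. Qed.

Lemma act_meet_greatest v e : exists a, act v (e `&` d v) = Some a.
Proof.
have := axA.1 _ _ _ (greatest_d v).1 (leIr (d v) e); rewrite /defined.
by case: (act v _) => [a _|//]; exists a.
Qed.

Lemma leX_common_lower_lcp r e f k v' u' a b :
  ~ (exists (c : A) v'' u'', v' = c :: v'' /\ u' = c :: u'') ->
  act v' (e `&` d v') = Some a -> act u' (f `&` d u') = Some b ->
  leX act r (e, k ++ v') -> leX act r (f, k ++ u') -> leX act r (a `&` b, k).
Proof.
move=> lcp Ha Hb /leX_inv [w1 [q1 [e1 [g1 [Ev [e1e [He1 Hr1]]]]]]].
move=> /leX_inv [w2 [q2 [f1 [g2 [Eu [f1f [Hf1 Hr2]]]]]]].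
have [[h w] [[m1 [/= Ew1 Hm1]] [m2 [/= Ew2 Hm2]]]] :=
  simX_joinable (rst_trans _ _ _ _ _ (rst_sym _ _ _ _ Hr1) Hr2).
have Ev' : k ++ v' = w ++ (m1 ++ q1) by rewrite Ev Ew1 catA.
have Eu' : k ++ u' = w ++ (m2 ++ q2) by rewrite Eu Ew2 catA.
have [n Ek] := prefix_of_lcp lcp Ev' Eu'.
rewrite Ek -catA in Ev'; rewrite Ek -catA in Eu'.
move/List.app_inv_head in Ev'; move/List.app_inv_head in Eu'.
have [c1 [Hc1 Hnc1]] : exists c, act v' e1 = Some c /\ act n c = Some h.
  by apply: act_cat_inv; rewrite Ev'; apply: lpa.2 He1 Hm1.
have [c2 [Hc2 Hnc2]] : exists c, act u' f1 = Some c /\ act n c = Some h.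
  by apply: act_cat_inv; rewrite Eu'; apply: lpa.2 Hf1 Hm2.
have c1a : c1 <= a.
  by apply/(axB Hc1 Ha); rewrite lexI e1e (act_below_greatest Hc1).
have c2b : c2 <= b.
  by apply/(axB Hc2 Hb); rewrite lexI f1f (act_below_greatest Hc2).
exists (a `&` b), k, c1; split; first exact: rst_refl.
split; last by rewrite lexI c1a (act_inj Hnc1 Hnc2) c2b.
apply: (@rst_trans _ _ _ (h, w)); first by apply: rst_step; exists n.
apply: (@rst_trans _ _ _ (g1, w1)); last exact: rst_sym Hr1.
by apply: rst_sym; apply: rst_step; exists m1.
Qed.

Lemma is_meetX_lcp e f k v' u' a b :
  ~ (exists (c : A) v'' u'', v' = c :: v'' /\ u' = c :: u'') ->
  act v' (e `&` d v') = Some a -> act u' (f `&` d u') = Some b ->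
  is_meetX act (a `&` b, k) (e, k ++ v') (f, k ++ u').
Proof.
move=> lcp Ha Hb; split; [|split].
- by apply: leX_cat Ha _ _; rewrite ?leIl.
- by apply: leX_cat Hb _ _; rewrite ?leIr ?leIl.
- by move=> r; apply: leX_common_lower_lcp.
Qed.

End PartialActionOfFreeMonoid.

Section GreatestOfDomain.
Variables (A : Type) (disp : Order.disp_t) (Y : meetSemilatticeType disp).
Variable act : seq A -> Y -> option Y.
Hypotheses (lpa : left_partial_action act) (axB : axiomB act).

Lemma ract_nil x : ract act x [::] = x.
Proof.
have := epsilon_spec (inhabits x) (fun w => act [::] w = Some x) (ex_intro _ x (lpa.1 x)).
by rewrite lpa.1 => -[].
Qed.

Lemma mulM_proj x y t : mulM act (x, [::]) (y, t) = (x `&` y, t).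
Proof. by rewrite /mulM /= ract_nil lpa.1. Qed.

Lemma sigmaM_word a b : sigmaM act a b -> a.2 = b.2.
Proof.
move=> [_ [_ sigma_ab]]; apply: (sigma_ab (fun p q => p.2 = q.2)); last first.
  by move=> ? ? [? [_ ->]] [? [_ ->]].
do 3!split=> //; first by move=> ? ? ? -> ->.
by move=> ? ? ? ? _ _ _ _ /= -> ->.
Qed.

(* (x, t) = (x, 1)(y, t) and (y, t) = (y, 1)(x, t), and all projections are sigma-related. *)
Lemma sigmaM_same_word x y t :
  inM act (x, t) -> inM act (y, t) -> sigmaM act (x, t) (y, t).
Proof.
move=> Hx Hy; do 2!split=> //; move=> R [Rrefl [Rsym [Rtrans Rmul]]] Rproj.
have inP z : inM act (z, [::]) by exists z; apply: lpa.1.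
have prP z : projM act (z, [::]) by exists (z, [::]).
have := Rmul _ _ _ _ (inP x) (inP y) Hx Hx (Rproj _ _ (prP x) (prP y)) (Rrefl _ Hx).
have := Rmul _ _ _ _ (inP y) (inP x) Hy Hy (Rproj _ _ (prP y) (prP x)) (Rrefl _ Hy).
rewrite !mulM_proj !meetxx meetC => Ryx Rxy.
exact: Rtrans Rxy (Rsym _ _ Ryx).
Qed.

Lemma greatest_of_dom_exists v :
  axiomC act -> sigma_classes_have_max act -> exists dv, greatest_of_dom act v dv.
Proof.
move=> axC max_sigma; have [y] := axC v; rewrite /defined.
case Hy: (act v y) => [y'|] // _.
have [[m w] [Hm max_m]] := max_sigma (y', v) (ex_intro _ y Hy).
have /= Ew := sigmaM_word Hm; subst w.
have [x Hx] := Hm.1.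
exists x; split=> [|z]; first by rewrite /defined Hx.
rewrite /defined; case Hz: (act v z) => [z'|] // _.
have [_ [[[c t] [_ ->]] Ez]] := max_m _ (sigmaM_same_word (ex_intro _ z Hz) (ex_intro _ y Hy)).
move: Ez; rewrite /plusM mulM_proj => -[Ez].
by apply/(axB Hz Hx); rewrite Ez leIr.
Qed.

End GreatestOfDomain.

Theorem lemma5p4 (A : Type) (disp : Order.disp_t) (Y : meetSemilatticeType disp)
  (act : seq A -> Y -> option Y) :
  left_partial_action act -> axiomA act -> axiomB act -> axiomC act ->
  partially_defined_action act -> ultra_F_restriction_monoid act ->
  (forall v, exists d, greatest_of_dom act v d) /\
  ((forall p, leX act p p) /\ (forall p q r, leX act p q -> leX act q r -> leX act p r)) /\
  (forall d : seq A -> Y, (forall v, greatest_of_dom act v (d v)) ->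
   forall (e f : Y) (v u k v' u' : seq A),
     v = k ++ v' -> u = k ++ u' ->
     ~ (exists (a : A) v'' u'', v' = a :: v'' /\ u' = a :: u'') ->
     exists a b, act v' (e `&` d v') = Some a /\ act u' (f `&` d u') = Some b /\
       is_meetX act (a `&` b, k) (e, v) (f, u)).
Proof.
move=> lpa axA axB axC pda [_ [_ [max_sigma _]]].
split; first by move=> v; apply: greatest_of_dom_exists.
split; first by split; [apply: leX_refl | apply: leX_trans].
move=> d greatest_d e f v u k v' u' -> -> lcp.
have [a Ha] := act_meet_greatest axA greatest_d v' e.
have [b Hb] := act_meet_greatest axA greatest_d u' f.
by exists a, b; do 2!split=> //; apply: is_meetX_lcp.
Qed.
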